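(* Let $F=(f_1,\dots,f_n)$ be twice-differentiable objective functions $\mathbb{R}^d\to\mathbb{R}$ with $\mu\mathbf{I}\preceq\nabla^2f_i\preceq L\mathbf{I}$ for all $i$ (where $0<\mu\le L$), and let $R:=\mathrm{diam}(\mathrm{Pareto}(F))$. Then the map $x^*:(\Delta^{n-1},\ell_1)\to(\mathbb{R}^d,\ell_2)$, $x^*(\beta)=\operatorname{argmin}_x\sum_i\beta_if_i(x)$, is $LR/\mu$-Lipschitz.
   Context: $\Delta^{n-1}$ is the simplex of convex weights. A point $x$ is Pareto optimal if for all $x'$, $f_i(x')<f_i(x)$ for some $i$ implies $f_j(x')>f_j(x)$ for some $j$; $\mathrm{Pareto}(F)$ is the set of Pareto optimal points, and $\mathrm{diam}$ is taken in $\ell_2$. *)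

From HB Require Import structures.
From mathcomp Require Import all_boot all_order all_algebra.
From mathcomp Require Import all_classical all_reals all_analysis.
Set Implicit Arguments. Unset Strict Implicit. Unset Printing Implicit Defensive.
Import Order.TTheory GRing.Theory Num.Theory.
Import numFieldNormedType.Exports.
Local Open Scope classical_set_scope.
Local Open Scope ring_scope.

Definition l2norm (R : realType) (d : nat) (v : 'rV[R]_d) : R :=
  Num.sqrt (\sum_(i < d) (v ord0 i) ^+ 2).

Definition l1dist (R : realType) (n : nat) (b b' : 'I_n -> R) : R :=
  \sum_(i < n) `|b i - b' i|.

Definition in_simplex (R : realType) (n : nat) (b : 'I_n -> R) : Prop :=
  (forall i, 0 <= b i) /\ \sum_(i < n) b i = 1.

Definition pareto_optimal (R : realType) (d n : nat)
  (F : 'I_n -> 'rV[R]_d -> R) (x : 'rV[R]_d) : Prop :=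
  forall x' : 'rV[R]_d, (exists i, F i x' < F i x) -> exists j, F j x < F j x'.

Definition Pareto (R : realType) (d n : nat) (F : 'I_n -> 'rV[R]_d -> R)
  : set 'rV[R]_d := [set x | pareto_optimal F x].

Definition diam2 (R : realType) (d : nat) (A : set 'rV[R]_d) : \bar R :=
  ereal_sup [set (l2norm (x - y))%:E | x in A & y in A].

Definition twice_differentiable (R : realType) (d : nat) (f : 'rV[R]_d -> R) : Prop :=
  (forall x, differentiable f x) /\
  (forall v x, differentiable ('D_v f) x).

(* mu I <= Hessian f(x) <= L I, written via the quadratic form v^T (Hess f x) v,
   which is the second directional derivative 'D_v ('D_v f) x. *)
Definition hessian_bounds (R : realType) (d : nat) (mu L : R)
  (f : 'rV[R]_d -> R) : Prop :=
  forall x v : 'rV[R]_d,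
    mu * (l2norm v) ^+ 2 <= 'D_v ('D_v f) x <= L * (l2norm v) ^+ 2.

Definition is_argmin (R : realType) (d n : nat) (F : 'I_n -> 'rV[R]_d -> R)
  (b : 'I_n -> R) (x : 'rV[R]_d) : Prop :=
  forall y, \sum_(i < n) b i * F i x <= \sum_(i < n) b i * F i y.

From HB Require Import structures.
From mathcomp Require Import all_boot all_order all_algebra.
From mathcomp Require Import all_classical all_reals all_analysis.
From mathcomp Require Import ring lra.
Set Implicit Arguments. Unset Strict Implicit. Unset Printing Implicit Defensive.
Import Order.TTheory GRing.Theory Num.Theory.
Import numFieldNormedType.Exports.
Local Open Scope classical_set_scope.
Local Open Scope ring_scope.

(* Strong convexity makes the directional derivatives strongly monotone and
   every weighted minimizer Pareto optimal. For v := x*(b) - x*(b'), the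
   first-order conditions sum_i b_i D_v f_i (x*(b)) = 0 = sum_i b'_i D_v f_i (x*(b'))
   and monotonicity give mu |v|^2 <= sum_i (b'_i - b_i) D_v f_i (x*(b)).
   Each f_i has a minimizer y_i, itself Pareto optimal, and L-smoothness yields
   |D_v f_i x| <= L |v| |x - y_i| <= L |v| R; hence mu |v|^2 <= |b - b'|_1 L |v| R. *)

Section RealFunctions.
Variable R : realType.
Implicit Types (g dg : R -> R) (a x y : R).

Lemma is_derive_ndecr g dg x y : (forall t, is_derive t (1 : R) g (dg t)) ->
  (forall t, x <= t <= y -> 0 <= dg t) -> x <= y -> g x <= g y.
Proof.
move=> g' dg_ge0 xy.
have g_cont : {within `[x, y], continuous g}.
  apply: continuous_subspaceT => t; apply: differentiable_continuous.
  by rewrite -derivable1_diffP; exact: (@ex_derive _ _ _ _ _ _ _ (g' t)).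
have [c /andP[xc cy] gyx] := MVT_segment xy (fun t _ => g' t) g_cont.
rewrite -subr_ge0 gyx mulr_ge0 ?subr_ge0 // dg_ge0 //.
by move: xc cy; rewrite !bnd_simp => -> ->.
Qed.

Lemma derive2_ge0_ge0 g dg ddg : (forall t, is_derive t (1 : R) g (dg t)) ->
  (forall t, is_derive t (1 : R) dg (ddg t)) -> g 0 = 0 -> dg 0 = 0 ->
  (forall t, 0 <= ddg t) -> forall t, 0 <= g t.
Proof.
move=> g' dg' g0 dg0 ddg_ge0 t.
have dg_ndecr x y : x <= y -> dg x <= dg y.
  by move=> xy; exact: (is_derive_ndecr dg' (fun s _ => ddg_ge0 s) xy).
have [t_ge0 | t_lt0] := lerP 0 t.
  rewrite -g0; apply: (is_derive_ndecr g') t_ge0 => s /andP[s_ge0 _].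
  by rewrite -dg0 dg_ndecr.
have Ng' s : is_derive s (1 : R) (- g) (- dg s) by exact: is_deriveN.
suff : (- g) t <= (- g) 0 by rewrite !opprfctE g0 oppr0 oppr_le0.
apply: (is_derive_ndecr Ng') (ltW t_lt0) => s /andP[_ s_le0].
by rewrite oppr_ge0 -dg0 dg_ndecr.
Qed.

Lemma taylor2_ge g dg ddg a : (forall t, is_derive t (1 : R) g (dg t)) ->
  (forall t, is_derive t (1 : R) dg (ddg t)) -> (forall t, a <= ddg t) ->
  forall t, g 0 + t * dg 0 + a / 2 * t ^+ 2 <= g t.
Proof.
move=> g' dg' a_le t; rewrite -subr_ge0.
pose q s := g 0 + s * dg 0 + a / 2 * s ^+ 2.
pose dq s := dg 0 + a * s.
apply: (@derive2_ge0_ge0 (g - q) (dg - dq) (fun s => ddg s - a)).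
- by move=> s; apply: is_derive_eq; rewrite /GRing.scale !fctE /dq /=; field.
- by move=> s; apply: is_derive_eq; rewrite /GRing.scale /=; field.
- by rewrite !fctE /q /=; field.
- by rewrite !fctE /dq /=; field.
- by move=> s; rewrite subr_ge0.
Qed.

Lemma taylor2_le g dg ddg a : (forall t, is_derive t (1 : R) g (dg t)) ->
  (forall t, is_derive t (1 : R) dg (ddg t)) -> (forall t, ddg t <= a) ->
  forall t, g t <= g 0 + t * dg 0 + a / 2 * t ^+ 2.
Proof.
move=> g' dg' le_a t.
have Nle s : - a <= - ddg s by rewrite lerN2.
have := @taylor2_ge (- g) (- dg) (fun s => - ddg s) (- a)
  (fun s => is_deriveN (g' s)) (fun s => is_deriveN (dg' s)) Nle t.
rewrite !opprfctE; lra.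
Qed.
End RealFunctions.

Section Quadratics.
Variable R : realType.
Implicit Types (D c m : R).

Lemma discr_le_of_quadratic_ge c D m : 0 <= c ->
  (forall t, - m <= t * D + c * t ^+ 2) -> D ^+ 2 <= 4 * c * m.
Proof.
move=> c_ge0 quad_ge.
have [c_gt0 | c_le0] := ltrP 0 c.
  have := quad_ge (- D / (2 * c)).
  have -> : - D / (2 * c) * D + c * (- D / (2 * c)) ^+ 2 = - (D ^+ 2 / (4 * c)).
    by field; rewrite gt_eqF.
  by rewrite lerN2 -ler_pdivrMl ?mulr_gt0 // mulrC.
have c0 : c = 0 by apply/eqP; rewrite eq_le c_le0 c_ge0.
rewrite c0 mulr0 mul0r.
have [-> | D_neq0] := eqVneq D 0; first by rewrite expr0n.
have := quad_ge (- (m + 1) / D); rewrite c0 mul0r addr0 mulfVK //.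
by rewrite lerN2 gerDl ler10.
Qed.

Lemma eq0_of_quadratic_ge0 c D : 0 <= c ->
  (forall t, 0 <= t * D + c * t ^+ 2) -> D = 0.
Proof.
move=> c_ge0 quad_ge0; apply/eqP; rewrite -sqrf_eq0 eq_le sqr_ge0 andbT.
by rewrite -(mulr0 (4 * c)) discr_le_of_quadratic_ge // => t; rewrite oppr0.
Qed.

Lemma norm_le_of_sqr_le (D X : R) : 0 <= X -> D ^+ 2 <= X ^+ 2 -> `|D| <= X.
Proof. by move=> X_ge0; rewrite -(real_normK (num_real D)) ler_sqr ?nnegrE. Qed.
End Quadratics.

Section L2Norm.
Variables (R : realType) (d : nat).
Implicit Types (v : 'rV[R]_d).

Lemma l2norm_ge0 v : 0 <= l2norm v.
Proof. exact: sqrtr_ge0. Qed.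

Lemma l2norm0 : l2norm (0 : 'rV[R]_d) = 0.
Proof. by rewrite /l2norm big1 ?sqrtr0 // => i _; rewrite mxE expr0n. Qed.

Lemma l2norm_eq0 v : l2norm v = 0 -> v = 0.
Proof.
move=> /eqP; rewrite /l2norm sqrtr_eq0 => sum_le0.
have sum0 : \sum_(i < d) (v ord0 i) ^+ 2 = 0.
  by apply/eqP; rewrite eq_le sum_le0 sumr_ge0 // => i _; rewrite sqr_ge0.
apply/matrixP => i j; rewrite mxE (ord1 i).
have /eqP := psumr_eq0P (fun i _ => sqr_ge0 (v ord0 i)) sum0 (i := j) isT.
by rewrite sqrf_eq0 => /eqP.
Qed.

Lemma l2norm_sqr_le0 v : l2norm v ^+ 2 <= 0 -> v = 0.
Proof.
by move=> sqr_le0; apply/l2norm_eq0/eqP; rewrite -sqrf_eq0 eq_le sqr_ge0 andbT.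
Qed.

Lemma l2norm_le_diam2 (A : set 'rV[R]_d) p q : A p -> A q ->
  ((l2norm (p - q))%:E <= diam2 A)%E.
Proof. by move=> Ap Aq; apply: ereal_sup_ubound; exists p => //; exists q. Qed.

Lemma l2norm_coord v i : `|v ord0 i| <= l2norm v.
Proof.
rewrite -sqrtr_sqr /l2norm ler_wsqrtr // (bigD1 i) //= lerDl.
by rewrite sumr_ge0 // => j _; rewrite sqr_ge0.
Qed.

Lemma exists_derive_bound (f : 'rV[R]_d -> R) p : differentiable f p ->
  exists2 C, 0 <= C & forall u, `|'D_u f p| <= C * l2norm u.
Proof.
move=> df; exists (\sum_(k < d) `|'d f p ('e_k : 'rV[R]_d)|); first by rewrite sumr_ge0.
move=> u; rewrite deriveE // {1}(row_sum_delta u) linear_sum mulr_suml.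
apply: (le_trans (ler_norm_sum _ _ _)); apply: ler_sum => k _.
by rewrite linearZ normrM mulrC ler_wpM2l // l2norm_coord.
Qed.

Lemma exists_min_of_coercive (f : 'rV[R]_d -> R) r : 0 <= r -> continuous f ->
  (forall z, r < l2norm z -> f 0 <= f z) -> exists y, forall z, f y <= f z.
Proof.
move=> r_ge0 f_cont coercive.
pose box := [set v : 'rV[R]_d | forall i, `[(- r), r]%classic (v ord0 i)].
have box_compact : compact box.
  by apply: (@rV_compact _ _ (fun=> `[(- r), r]%classic)) => _; exact: segment_compact.
have box0 : box 0 by move=> i; rewrite /= mxE in_itv /= oppr_le0 r_ge0.
have [y _ ymin] := compact_EVT_min (ex_intro _ _ box0) box_compact
  (continuous_subspaceT f_cont).
exists y => z; have [box_z | nbox_z] := pselect (box z).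
  by apply: ymin; rewrite inE.
have [i /= zi] : exists i, ~ `[(- r), r]%classic (z ord0 i) by exact/existsNP.
apply: (le_trans (ymin 0 _)); first by rewrite inE.
apply: coercive; apply: lt_le_trans (l2norm_coord z i).
by rewrite ltNge; apply/negP; rewrite ler_norml => zi_r; apply: zi; rewrite in_itv.
Qed.
End L2Norm.

Section DirectionalTaylor.
Variables (R : realType) (d : nat).
Implicit Types (f : 'rV[R]_d -> R) (p v : 'rV[R]_d).

Lemma line_is_derive f p v (t : R) : derivable f (p + t *: v) v ->
  is_derive t (1 : R) (fun s => f (p + s *: v)) ('D_v f (p + t *: v)).
Proof.
move=> df.
have quotE : (fun h : R => h^-1 *: (((fun s => f (p + s *: v)) \o shift t) (h *: 1)
                 - f (p + t *: v))) =
             (fun h : R => h^-1 *: ((f \o shift (p + t *: v)) (h *: v) - f (p + t *: v))).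
  apply/funext => h /=; congr (_ *: (f _ - _)).
  by rewrite [h%:A]mulr1 scalerDl addrCA addrA.
by split; rewrite /derivable /derive quotE.
Qed.

Lemma line_derives f p v : twice_differentiable f ->
  (forall t : R, is_derive t (1 : R) (fun s => f (p + s *: v)) ('D_v f (p + t *: v))) /\
  (forall t : R, is_derive t (1 : R) (fun s => 'D_v f (p + s *: v))
                   ('D_v ('D_v f) (p + t *: v))).
Proof.
by move=> [f1 f2]; split=> t; apply: line_is_derive; apply: diff_derivable.
Qed.

Lemma line_taylor2_ge f p v (a : R) : twice_differentiable f ->
  (forall x, a <= 'D_v ('D_v f) x) ->
  forall t, f p + t * 'D_v f p + a / 2 * t ^+ 2 <= f (p + t *: v).
Proof.
move=> /(line_derives p v) [f' df'] a_le t.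
by have := taylor2_ge f' df' (fun s => a_le _) t; rewrite scale0r addr0.
Qed.

Lemma line_taylor2_le f p v (a : R) : twice_differentiable f ->
  (forall x, 'D_v ('D_v f) x <= a) ->
  forall t, f (p + t *: v) <= f p + t * 'D_v f p + a / 2 * t ^+ 2.
Proof.
move=> /(line_derives p v) [f' df'] le_a t.
by have := taylor2_le f' df' (fun s => le_a _) t; rewrite scale0r addr0.
Qed.
End DirectionalTaylor.

Section HessianBounds.
Variables (R : realType) (d : nat) (mu L : R) (f : 'rV[R]_d -> R).
Hypotheses (f2 : twice_differentiable f) (f_hess : hessian_bounds mu L f).
Implicit Types (p u v w x y z : 'rV[R]_d) (t : R).

Lemma hessian_taylor_ge p v t :
  f p + t * 'D_v f p + mu * l2norm v ^+ 2 / 2 * t ^+ 2 <= f (p + t *: v).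
Proof. by apply: line_taylor2_ge => // x; case/andP: (f_hess x v). Qed.

Lemma hessian_taylor_le p v t :
  f (p + t *: v) <= f p + t * 'D_v f p + L * l2norm v ^+ 2 / 2 * t ^+ 2.
Proof. by apply: line_taylor2_le => // x; case/andP: (f_hess x v). Qed.

Lemma derive_sub_ge p v : mu * l2norm v ^+ 2 <= 'D_v f (p + v) - 'D_v f p.
Proof.
have := hessian_taylor_ge p v 1; have := hessian_taylor_ge (p + v) v (-1).
by rewrite scale1r scaleN1r addrK; lra.
Qed.

Lemma hessian_midpoint_le p u :
  2 * f p + mu * l2norm u ^+ 2 / 4 <= f (p + 2^-1 *: u) + f (p - 2^-1 *: u).
Proof.
have := hessian_taylor_ge p u 2^-1; have := hessian_taylor_ge p u (- 2^-1).
by rewrite scaleNr; lra.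
Qed.

(* Not implied by [hessian_bounds] when [d = 0]. *)
Hypothesis L_ge0 : 0 <= L.

Lemma derive_eq0_at_min y : (forall z, f y <= f z) -> forall w, 'D_w f y = 0.
Proof.
move=> ymin w; apply: (@eq0_of_quadratic_ge0 _ (L * l2norm w ^+ 2 / 2)).
  by rewrite divr_ge0 // mulr_ge0 // sqr_ge0.
by move=> t; have := le_trans (ymin _) (hessian_taylor_le y w t); rewrite -addrA lerDl.
Qed.

Lemma norm_derive_le_at_min y : (forall z, f y <= f z) ->
  forall x v, `|'D_v f x| <= L * l2norm v * l2norm (x - y).
Proof.
move=> ymin x v; apply: norm_le_of_sqr_le; first by rewrite !mulr_ge0 ?l2norm_ge0.
pose c := L * l2norm v ^+ 2 / 2.
have c_ge0 : 0 <= c by rewrite divr_ge0 // mulr_ge0 // sqr_ge0.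
have slope_sqr_le : 'D_v f x ^+ 2 <= 4 * c * (f x - f y).
  apply: discr_le_of_quadratic_ge => // t.
  have := le_trans (ymin _) (hessian_taylor_le x v t).
  by rewrite -addrA -lerBlDl opprB addrC.
have gap_le : f x - f y <= L * l2norm (x - y) ^+ 2 / 2.
  have := hessian_taylor_le y (x - y) 1.
  rewrite scale1r addrC subrK (derive_eq0_at_min ymin) mulr0 addr0 expr1n mulr1.
  by rewrite lerBlDl.
apply: (le_trans slope_sqr_le).
have -> : (L * l2norm v * l2norm (x - y)) ^+ 2 = 4 * c * (L * l2norm (x - y) ^+ 2 / 2).
  by rewrite /c; field.
by rewrite ler_wpM2l // mulr_ge0.
Qed.

Hypothesis mu_gt0 : 0 < mu.

Lemma hessian_exists_min : exists y, forall z, f y <= f z.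
Proof.
have [C C_ge0 slope_le] := exists_derive_bound (f2.1 0).
apply: (@exists_min_of_coercive _ _ _ (2 * C / mu)).
- by rewrite divr_ge0 ?mulr_ge0 // ltW.
- by move=> x; exact: differentiable_continuous (f2.1 x).
move=> z z_far.
have := hessian_taylor_ge 0 z 1; rewrite add0r scale1r expr1n mulr1 mul1r.
apply: le_trans; rewrite -addrA lerDl.
have : C * l2norm z <= mu * l2norm z ^+ 2 / 2.
  move: z_far; rewrite ltr_pdivrMr // => z_far.
  have := l2norm_ge0 z; nra.
have /andP[slope_ge _] : - (C * l2norm z) <= 'D_z f 0 <= C * l2norm z.
  by rewrite -ler_norml.
lra.
Qed.
End HessianBounds.

Section Simplex.
Variables (R : realType) (n : nat).
Implicit Types (a b : 'I_n -> R).

Lemma simplex_sum_mulrDr b a (c : R) : in_simplex b ->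
  \sum_(i < n) b i * (a i + c) = \sum_(i < n) b i * a i + c.
Proof.
move=> [_ b1]; rewrite -[c in RHS]mul1r -b1 mulr_suml -big_split.
by apply: eq_bigr => i _; rewrite mulrDr.
Qed.

Lemma sum_delta_mulr (i : 'I_n) a : \sum_(j < n) (j == i)%:R * a j = a i.
Proof.
rewrite (bigD1 i) //= eqxx mul1r big1 ?addr0 // => j /negbTE ->.
by rewrite mul0r.
Qed.

Lemma simplex_delta (i : 'I_n) : in_simplex (fun j : 'I_n => ((j == i)%:R : R)).
Proof.
split=> [j|]; first by rewrite ler0n.
by rewrite -[RHS](sum_delta_mulr i (fun=> 1)); apply: eq_bigr => j _; rewrite mulr1.
Qed.

Lemma l1dist_eq0 b b' : l1dist b b' = 0 -> b = b'.
Proof.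
move=> dist0; apply/funext => i; apply/eqP; rewrite -subr_eq0 -normr_eq0.
by apply/eqP; exact: (psumr_eq0P (fun i _ => normr_ge0 (b i - b' i)) dist0).
Qed.
End Simplex.

Section WeightedObjectives.
Variables (R : realType) (d n : nat) (F : 'I_n -> 'rV[R]_d -> R) (mu L : R).
Hypotheses (F2 : forall i, twice_differentiable (F i))
  (F_hess : forall i, hessian_bounds mu L (F i)).
Implicit Types (b : 'I_n -> R) (p u w x y z : 'rV[R]_d).

Hypothesis L_ge0 : 0 <= L.

Lemma weighted_derive_eq0 b z : in_simplex b -> is_argmin F b z ->
  forall w, \sum_(i < n) b i * 'D_w (F i) z = 0.
Proof.
move=> bS zmin w.
apply: (@eq0_of_quadratic_ge0 _ (L * l2norm w ^+ 2 / 2)).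
  by rewrite divr_ge0 // mulr_ge0 // sqr_ge0.
move=> t; have sumE : \sum_(i < n) b i * (F i z + t * 'D_w (F i) z) =
    \sum_(i < n) b i * F i z + t * \sum_(i < n) b i * 'D_w (F i) z.
  by rewrite mulr_sumr -big_split; apply: eq_bigr => i _; rewrite mulrDr mulrCA.
have := le_trans (zmin (z + t *: w)) (ler_sum _ (fun i _ =>
  ler_wpM2l (bS.1 i) (hessian_taylor_le (F2 i) (F_hess i) z w t))).
by rewrite simplex_sum_mulrDr // sumE -addrA lerDl.
Qed.

Hypothesis mu_gt0 : 0 < mu.

Lemma pareto_of_argmin b z : in_simplex b -> is_argmin F b z -> Pareto F z.
Proof.
move=> bS zmin z' [i Fi_lt]; apply: contrapT => not_worse.
have z'_le j : F j z' <= F j z.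
  by rewrite leNgt; apply/negP => lt_j; apply: not_worse; exists j.
pose u := z' - z; pose p := z + 2^-1 *: u.
have Fp_le j : F j p + mu * l2norm u ^+ 2 / 8 <= F j z.
  have := hessian_midpoint_le (F2 j) (F_hess j) p u.
  have -> : p + 2^-1 *: u = z'.
    rewrite -addrA -scalerDl -mulr2n -[2^-1 *+ 2]mulr_natr mulVf ?pnatr_eq0 //.
    by rewrite scale1r addrC subrK.
  have -> : p - 2^-1 *: u = z by rewrite addrK.
  by have := z'_le j; lra.
have := le_trans (ler_sum _ (fun j _ => ler_wpM2l (bS.1 j) (Fp_le j))) (zmin p).
rewrite simplex_sum_mulrDr // gerDl pmulr_lle0 ?invr_gt0 ?ltr0n // pmulr_rle0 //.
move=> /l2norm_sqr_le0/eqP.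
by rewrite subr_eq0 => /eqP z'E; move: Fi_lt; rewrite z'E ltxx.
Qed.

Lemma pareto_of_min i y : (forall z, F i y <= F i z) -> Pareto F y.
Proof.
move=> ymin; apply: (pareto_of_argmin (simplex_delta R i)) => z.
by rewrite !sum_delta_mulr.
Qed.

Lemma argmin_sub_sqr_le b b' x x' : in_simplex b -> in_simplex b' ->
  is_argmin F b x -> is_argmin F b' x' ->
  mu * l2norm (x - x') ^+ 2 <= \sum_(i < n) (b' i - b i) * 'D_(x - x') (F i) x.
Proof.
move=> bS b'S xmin x'min; set v := x - x'.
have slopesE : \sum_(i < n) (b' i - b i) * 'D_v (F i) x =
               \sum_(i < n) b' i * ('D_v (F i) x - 'D_v (F i) x').
  under eq_bigr do rewrite mulrBl; under [RHS]eq_bigr do rewrite mulrBr.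
  by rewrite !sumrB (weighted_derive_eq0 bS xmin) (weighted_derive_eq0 b'S x'min) !subr0.
rewrite slopesE -[mu * _]mul1r -b'S.2 mulr_suml; apply: ler_sum => i _.
rewrite ler_wpM2l ?b'S.1 //.
by have := derive_sub_ge (F2 i) (F_hess i) x' v; rewrite [x' + v]addrC subrK.
Qed.

Lemma argmin_unique b x x' : in_simplex b ->
  is_argmin F b x -> is_argmin F b x' -> x = x'.
Proof.
move=> bS xmin x'min; have := argmin_sub_sqr_le bS bS xmin x'min.
under eq_bigr do rewrite subrr mul0r.
by rewrite big1 // pmulr_rle0 // => /l2norm_sqr_le0/eqP; rewrite subr_eq0 => /eqP.
Qed.

Lemma argmin_dist_le b b' x x' r : in_simplex b -> in_simplex b' ->
  is_argmin F b x -> is_argmin F b' x' ->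
  (forall p q, Pareto F p -> Pareto F q -> l2norm (p - q) <= r) ->
  l2norm (x - x') <= L / mu * r * l1dist b b'.
Proof.
move=> bS b'S xmin x'min diam_le; set s := l2norm (x - x').
have r_ge0 : 0 <= r.
  have xP := pareto_of_argmin bS xmin.
  by have := diam_le _ _ xP xP; rewrite subrr l2norm0.
have slope_le i : `|'D_(x - x') (F i) x| <= L * s * r.
  have [y ymin] := hessian_exists_min (F2 i) (F_hess i) mu_gt0.
  apply: le_trans (norm_derive_le_at_min (F2 i) (F_hess i) L_ge0 ymin x (x - x')) _.
  rewrite ler_wpM2l ?mulr_ge0 ?l2norm_ge0 //.
  exact: diam_le (pareto_of_argmin bS xmin) (pareto_of_min ymin).
have gap_le : mu * s ^+ 2 <= l1dist b b' * (L * s * r).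
  apply: le_trans (argmin_sub_sqr_le bS b'S xmin x'min) _.
  rewrite /l1dist mulr_suml; apply: ler_sum => i _.
  by rewrite (le_trans (ler_norm _)) // normrM distrC ler_wpM2l.
have l1_ge0 : 0 <= l1dist b b' by rewrite sumr_ge0.
have [s0 | s_gt0] := eqVneq s 0.
  by rewrite s0 !mulr_ge0 ?invr_ge0 ?(ltW mu_gt0).
have {}s_gt0 : 0 < s by rewrite lt_def s_gt0 l2norm_ge0.
have -> : L / mu * r * l1dist b b' = l1dist b b' * L * r / mu.
  by field; rewrite gt_eqF.
rewrite ler_pdivlMr //; nra.
Qed.
End WeightedObjectives.

Theorem lemma8 (R : realType) (d n : nat) (F : 'I_n -> 'rV[R]_d -> R) (mu L : R) :
  0 < mu -> mu <= L ->
  (forall i, twice_differentiable (F i)) ->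
  (forall i, hessian_bounds mu L (F i)) ->
  forall (b b' : 'I_n -> R) (x x' : 'rV[R]_d),
    in_simplex b -> in_simplex b' ->
    is_argmin F b x -> is_argmin F b' x' ->
    ((l2norm (x - x'))%:E <=
       (L / mu)%:E * diam2 (Pareto F) * (l1dist b b')%:E)%E.
Proof.
move=> mu_gt0 mu_le_L F2 F_hess b b' x x' bS b'S xmin x'min.
have L_gt0 : 0 < L := lt_le_trans mu_gt0 mu_le_L.
have L_ge0 := ltW L_gt0.
(* In [\bar R], [+oo * 0 = 0]: equal weights must give equal minimizers. *)
have [l1_0 | l1_neq0] := eqVneq (l1dist b b') 0.
  have x'min_b : is_argmin F b x' by rewrite (l1dist_eq0 l1_0).
  rewrite (argmin_unique F2 F_hess L_ge0 mu_gt0 bS xmin x'min_b).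
  by rewrite subrr l2norm0 l1_0 mule0.
have xP := pareto_of_argmin F2 F_hess mu_gt0 bS xmin.
have := l2norm_le_diam2 xP xP; rewrite subrr l2norm0.
case diamE : (diam2 (Pareto F)) => [r | | ] // _.
  rewrite -!EFinM lee_fin; apply: (argmin_dist_le F2 F_hess) => // p q pP qP.
  by rewrite -lee_fin -diamE; exact: l2norm_le_diam2.
have l1_gt0 : 0 < l1dist b b' by rewrite lt_def l1_neq0 sumr_ge0.
by rewrite gt0_muley ?gt0_mulye ?lte_fin ?divr_gt0 ?leey.
Qed.
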